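(* Fix $n\ge1$ and all parameters other than $\gamma_{\rm P}$, and let $(z^{Q,\star}(\gamma_{\rm P}),z^{S,\star}(\gamma_{\rm P}))$ denote the unique maximiser of $f$. There exists $\overline\gamma_{{\rm P},n}>0$ such that for every $\gamma_{\rm P}\in(0,\overline\gamma_{{\rm P},n})$: $z^{Q,i,i,\star}(\gamma_{\rm P})>0$ for all $i$; $\mathrm{sgn}(z^{S,i,\star}(\gamma_{\rm P}))=-\mathrm{sgn}(\rho_i)$ for every $i$ with $\rho_i\ne0$; and $\mathrm{sgn}(z^{Q,i,j,\star}(\gamma_{\rm P}))=\mathrm{sgn}(\rho_i\rho_j)$ for every $i\ne j$ with $\rho_i\rho_j\ne0$.
   Context: Fix an integer $n\ge1$ and parameters $\sigma>0$, $\gamma_{\rm P}>0$, and for each $i\in\{1,\dots,n\}$: $c_i>0$, $\gamma_i>0$, $\nu_i>0$, $\rho_i\in(-1,1)$. Write $\nu=(\nu_1,\dots,\nu_n)^\top$, $\rho=(\rho_1,\dots,\rho_n)^\top$. The variables are a matrix $z^Q=(z^{Q,i,j})_{i,j}\in\mathbb{R}^{n\times n}$ ($i$ row, $j$ column) and a vector $z^S=(z^{S,1},\dots,z^{S,n})^\top\in\mathbb{R}^n$. Define $f:\mathbb{R}^{n\times n}\times\mathbb{R}^n\to\mathbb{R}$ by $$f(z^Q,z^S)=-\frac1n\sum_{i=1}^n\Big(\frac{(z^{Q,i,i})^2}{2c_i}+\frac{\gamma_i}{2}\sum_{j=1}^n\nu_j^2(z^{Q,i,j})^2+\frac{\gamma_i\sigma^2}{2}(z^{S,i})^2+\frac{\gamma_i\sigma}{\sqrt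 n}z^{S,i}\sum_{j=1}^n\rho_j\nu_jz^{Q,i,j}-\frac{z^{Q,i,i}}{c_i}\Big)-\frac{\gamma_{\rm P}}{2n^2}\sum_{i=1}^n\Big(\Big(\nu_i-\nu_i\sum_{j=1}^nz^{Q,j,i}-\frac{\rho_i\sigma}{\sqrt n}\sum_{j=1}^nz^{S,j}\Big)^2+\frac{(1-\rho_i^2)\sigma^2}{n}\Big(\sum_{j=1}^nz^{S,j}\Big)^2\Big).$$ For each $\gamma_{\rm P}>0$, $f$ has a unique global maximiser. *)

From HB Require Import structures.
From mathcomp Require Import all_boot all_order all_algebra.
From mathcomp Require Import reals.
Set Implicit Arguments. Unset Strict Implicit. Unset Printing Implicit Defensive.
Import Order.TTheory GRing.Theory Num.Theory.
Local Open Scope ring_scope.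

(* The objective f(z^Q, z^S); zQ i j = z^{Q,i,j} (row i, column j),
   zS i = z^{S,i}. Parameters: sigma, gP = gamma_P, c, gam = gamma_i, nu, rho. *)
Definition fobj (R : realType) (n : nat) (sigma gP : R)
  (c gam nu rho : 'I_n -> R) (zQ : 'M[R]_n) (zS : 'I_n -> R) : R :=
  - (n%:R)^-1 * \sum_(i < n)
      ( zQ i i ^+ 2 / (2 * c i)
      + gam i / 2 * \sum_(j < n) nu j ^+ 2 * zQ i j ^+ 2
      + gam i * sigma ^+ 2 / 2 * zS i ^+ 2
      + gam i * sigma / Num.sqrt (n%:R) * zS i * \sum_(j < n) rho j * nu j * zQ i j
      - zQ i i / c i)
  - gP / (2 * n%:R ^+ 2) * \sum_(i < n)
      ( (nu i - nu i * \sum_(j < n) zQ j i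
          - rho i * sigma / Num.sqrt (n%:R) * \sum_(j < n) zS j) ^+ 2
      + (1 - rho i ^+ 2) * sigma ^+ 2 / n%:R * (\sum_(j < n) zS j) ^+ 2).

Definition is_global_max (R : realType) (n : nat) (sigma gP : R)
  (c gam nu rho : 'I_n -> R) (zQ : 'M[R]_n) (zS : 'I_n -> R) : Prop :=
  forall (zQ' : 'M[R]_n) (zS' : 'I_n -> R),
    fobj sigma gP c gam nu rho zQ' zS' <= fobj sigma gP c gam nu rho zQ zS.

From HB Require Import structures.
From mathcomp Require Import all_boot all_order all_algebra.
From mathcomp Require Import reals ring lra.
Import Order.TTheory GRing.Theory Num.Theory.

(* At gP = 0 the objective is -(1/n) times a sum of convex quadratics [row_cost i], the
   i-th one depending only on row i of zQ and on zS i; its maximiser (zQ0, zS0) is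
   explicit and already has the required sign pattern.  Completing the square around
   this point shows that each row cost grows quadratically away from it, while comparing
   f at a maximiser with f at (zQ0, zS0) bounds the total growth by gP times the penalty
   at (zQ0, zS0).  So every maximiser is O(sqrt gP)-close to (zQ0, zS0), and for small
   gP the nonzero entries of (zQ0, zS0) keep their signs. *)

Set Implicit Arguments.
Unset Strict Implicit.
Unset Printing Implicit Defensive.
Local Open Scope ring_scope.

Lemma sgr_eq_of_sqr_lt (R : realFieldType) (a x : R) :
  (x - a) ^+ 2 < a ^+ 2 -> Num.sg x = Num.sg a.
Proof.
move=> h; case: (ltrgtP a 0) => ha; last by move: h; rewrite ha; nra.
- by rewrite (ltr0_sg ha) ltr0_sg //; nra.
- by rewrite (gtr0_sg ha) gtr0_sg //; nra.
Qed.

Lemma uniform_sgr_stability (R : realFieldType) (I : finType) (a C : I -> R) :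
  (forall i, 0 <= C i) ->
  exists2 e : R, 0 < e & forall (g : R) i x, 0 <= g -> g < e -> a i != 0 ->
    (x - a i) ^+ 2 <= g * C i -> Num.sg x = Num.sg (a i).
Proof.
(* Indices with [a i = 0] contribute [C i / 0 = 0] to [S]. *)
move=> C_ge0; pose S := \sum_i C i / a i ^+ 2.
have term_ge0 i : 0 <= C i / a i ^+ 2 by rewrite divr_ge0 ?sqr_ge0.
have S_ge0 : 0 <= S by rewrite sumr_ge0.
exists (1 + S)^-1; first by rewrite invr_gt0 ltr_wpDr.
move=> g i x g_ge0 g_lt a_neq0 dev; apply: sgr_eq_of_sqr_lt; apply: (le_lt_trans dev).
have a2_gt0 : 0 < a i ^+ 2 by rewrite exprn_even_gt0.
have term_le : C i / a i ^+ 2 <= S by rewrite /S (bigD1 i) //= lerDl sumr_ge0.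
have gS : g * (1 + S) < 1 by rewrite -ltr_pdivlMr ?mul1r // ltr_wpDr.
have : g * (C i / a i ^+ 2) < 1 by nra.
by rewrite mulrA ltr_pdivrMr // mul1r.
Qed.

Lemma sqr_bounds_of_completed_sqr (R : realFieldType) (th r x y E : R) :
  0 <= th <= 1 -> r ^+ 2 <= 1 -> (y + x * r) ^+ 2 + th * x ^+ 2 <= E ->
  th * y ^+ 2 <= 2 * E /\ th * x ^+ 2 <= E.
Proof.
case/andP=> th_ge0 th_le1 r2 h.
have xr2 : (x * r) ^+ 2 <= x ^+ 2 by rewrite exprMn ler_piMr ?sqr_ge0.
have y2 : y ^+ 2 <= 2 * (y + x * r) ^+ 2 + 2 * x ^+ 2.
  have := sqr_ge0 (y + 2 * (x * r)); nra.
have thy2 : th * y ^+ 2 <= th * (2 * (y + x * r) ^+ 2 + 2 * x ^+ 2) by rewrite ler_wpM2l.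
have : th * (y + x * r) ^+ 2 <= (y + x * r) ^+ 2 by rewrite ler_piMl ?sqr_ge0.
have := sqr_ge0 (y + x * r); split; nra.
Qed.

Lemma sum_sqr_le_sum (R : realDomainType) (n : nat) (F : 'I_n -> R) k :
  F k ^+ 2 <= \sum_(j < n) F j ^+ 2.
Proof. by rewrite (bigD1 k) //= lerDl sumr_ge0 // => j _; rewrite sqr_ge0. Qed.

Lemma sum_sqr_lt_card (R : realFieldType) (n : nat) (rho : 'I_n -> R) :
  (1 <= n)%N -> (forall i, -1 < rho i < 1) -> \sum_(j < n) rho j ^+ 2 < n%:R.
Proof.
move=> n_gt0 rho_bound; rewrite -[n in n%:R]card_ord -sumr_const.
apply: ltr_sum; first by apply/hasP; exists (Ordinal n_gt0); rewrite ?mem_index_enum.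
by move=> j _; have /andP[] := rho_bound j; nra.
Qed.

Section Objective.

Variables (R : realType) (n : nat) (sigma : R) (c gam nu rho : 'I_n -> R).
Hypotheses (n_gt0 : (1 <= n)%N) (sigma_gt0 : 0 < sigma) (c_gt0 : forall i, 0 < c i)
  (gam_gt0 : forall i, 0 < gam i) (nu_gt0 : forall i, 0 < nu i)
  (rho_bound : forall i, -1 < rho i < 1).

Local Notation sqrtn := (Num.sqrt (n%:R : R)).

Lemma sqrtn_gt0 : 0 < sqrtn.
Proof. by rewrite sqrtr_gt0 ltr0n. Qed.

Lemma sqrtn_sqr : sqrtn ^+ 2 = n%:R.
Proof. by rewrite sqr_sqrtr ?ler0n. Qed.

Definition row_cost (i : 'I_n) (q : 'I_n -> R) (s : R) : R :=
  q i ^+ 2 / (2 * c i)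
  + gam i / 2 * \sum_(j < n) nu j ^+ 2 * q j ^+ 2
  + gam i * sigma ^+ 2 / 2 * s ^+ 2
  + gam i * sigma / sqrtn * s * \sum_(j < n) rho j * nu j * q j
  - q i / c i.

Definition penalty (zQ : 'M[R]_n) (zS : 'I_n -> R) : R :=
  \sum_(i < n)
    ( (nu i - nu i * \sum_(j < n) zQ j i - rho i * sigma / sqrtn * \sum_(j < n) zS j) ^+ 2
    + (1 - rho i ^+ 2) * sigma ^+ 2 / n%:R * (\sum_(j < n) zS j) ^+ 2).

Lemma fobjE (gP : R) (zQ : 'M[R]_n) (zS : 'I_n -> R) : fobj sigma gP c gam nu rho zQ zS =
  - n%:R^-1 * \sum_(i < n) row_cost i (zQ i) (zS i) - gP / (2 * n%:R ^+ 2) * penalty zQ zS.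
Proof. by []. Qed.

Lemma penalty_ge0 (zQ : 'M[R]_n) (zS : 'I_n -> R) : 0 <= penalty zQ zS.
Proof.
have rho_sqr_le1 i : 0 <= 1 - rho i ^+ 2.
  by have /andP[] := rho_bound i; rewrite subr_ge0; nra.
apply: sumr_ge0 => i _; rewrite addr_ge0 ?sqr_ge0 // mulr_ge0 ?sqr_ge0 //.
by rewrite divr_ge0 // mulr_ge0 ?sqr_ge0 ?rho_sqr_le1.
Qed.

Lemma row_excess_sum_le (gP : R) (zQ zQ' : 'M[R]_n) (zS zS' : 'I_n -> R) : 0 <= gP ->
  is_global_max sigma gP c gam nu rho zQ zS ->
  \sum_(i < n) (row_cost i (zQ i) (zS i) - row_cost i (zQ' i) (zS' i))
    <= gP * penalty zQ' zS' / (2 * n%:R).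
Proof.
move=> gP_ge0 /(_ zQ' zS'); rewrite !fobjE => hmax; rewrite sumrB.
set G := \sum_(i < n) row_cost i (zQ i) (zS i) in hmax *.
set G' := \sum_(i < n) row_cost i (zQ' i) (zS' i) in hmax *.
set a := gP / _ in hmax *; rewrite !mulNr in hmax.
have n_pos : 0 < (n%:R : R) by rewrite ltr0n.
have a_ge0 : 0 <= a by rewrite divr_ge0 ?mulr_ge0 ?sqr_ge0.
have := mulr_ge0 a_ge0 (penalty_ge0 zQ zS) => aP_ge0.
rewrite (_ : _ / _ = n%:R * (a * penalty zQ' zS')); last by rewrite /a; field; rewrite gt_eqF.
by rewrite -ler_pdivrMl // mulrBr; lra.
Qed.

Definition theta : R := 1 - (\sum_(j < n) rho j ^+ 2) / n%:R.

Lemma theta_gt0 : 0 < theta.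
Proof. by rewrite subr_gt0 ltr_pdivrMr ?ltr0n // mul1r sum_sqr_lt_card. Qed.

Lemma theta_le1 : theta <= 1.
Proof. by rewrite lerBlDr lerDl divr_ge0 ?sumr_ge0 // => j _; rewrite sqr_ge0. Qed.

Lemma row_cost_growth i (q0 q : 'I_n -> R) (s0 s : R) :
  (forall j, j != i -> nu j * q0 j + sigma * s0 * rho j / sqrtn = 0) ->
  gam i * nu i * (nu i * q0 i + sigma * s0 * rho i / sqrtn) + (q0 i - 1) / c i = 0 ->
  sigma * s0 + sqrtn^-1 * \sum_(j < n) rho j * nu j * q0 j = 0 ->
  gam i / 2 * (\sum_(j < n) (nu j * (q j - q0 j) + sigma * (s - s0) * rho j / sqrtn) ^+ 2
               + theta * (sigma * (s - s0)) ^+ 2)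
  <= row_cost i q s - row_cost i q0 s0.
Proof.
move=> stat_off stat_diag stat_s.
have := sqrtn_gt0; have := sqrtn_sqr.
set A := sqrtn in stat_off stat_diag stat_s * => sqrtn2 A_gt0.
set u := fun j => q j - q0 j; set w := s - s0.
have qE j : q j = q0 j + u j by rewrite /u; ring.
have sE : s = s0 + w by rewrite /w; ring.
set X1 := \sum_(j < n) nu j ^+ 2 * q0 j ^+ 2.
set X2 := \sum_(j < n) nu j ^+ 2 * q0 j * u j.
set X3 := \sum_(j < n) nu j ^+ 2 * u j ^+ 2.
set Y1 := \sum_(j < n) rho j * nu j * q0 j.
set Y2 := \sum_(j < n) rho j * nu j * u j.
set T := \sum_(j < n) rho j ^+ 2.
have S1 : \sum_(j < n) nu j ^+ 2 * q j ^+ 2 = X1 + 2 * X2 + X3.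
  rewrite /X1 /X2 /X3 mulr_sumr -!big_split /=; apply: eq_bigr => j _; rewrite qE; ring.
have S2 : \sum_(j < n) rho j * nu j * q j = Y1 + Y2.
  rewrite /Y1 /Y2 -big_split /=; apply: eq_bigr => j _; rewrite qE; ring.
have S3 : \sum_(j < n) (nu j * (q j - q0 j) + sigma * w * rho j / A) ^+ 2
    = X3 + 2 * (sigma * w / A) * Y2 + (sigma * w / A) ^+ 2 * T.
  rewrite /X3 /Y2 /T !mulr_sumr -!big_split /=; apply: eq_bigr => j _; rewrite /u /w; ring.
have cross : gam i * X2 + gam i * sigma * s0 / A * Y2 + u i * (q0 i - 1) / c i = 0.
  have : \sum_(j < n) gam i * u j * nu j * (nu j * q0 j + sigma * s0 * rho j / A)
       = u i * (1 - q0 i) / c i.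
    rewrite (bigD1 i) //= big1 ?addr0 => [|j /stat_off ->]; last by rewrite mulr0.
    rewrite -[RHS]add0r -(mulr0 (u i)) -stat_diag; ring.
  have -> : \sum_(j < n) gam i * u j * nu j * (nu j * q0 j + sigma * s0 * rho j / A)
     = gam i * X2 + gam i * sigma * s0 / A * Y2.
    rewrite /X2 /Y2 !mulr_sumr -big_split /=; apply: eq_bigr => j _; ring.
  by move=> ->; field; rewrite gt_eqF.
rewrite /theta -/T -sqrtn2 /row_cost -/A S1 S2 S3 (qE i) sE -subr_ge0.
set LHS := (X in 0 <= X).
have -> : LHS = u i ^+ 2 / (2 * c i) + (gam i * X2 + gam i * sigma * s0 / A * Y2
    + u i * (q0 i - 1) / c i) + gam i * sigma * w * (sigma * s0 + A^-1 * Y1).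
  by rewrite /LHS /u /w -/X1 -/Y1; field; rewrite !gt_eqF.
by rewrite stat_s cross mulr0 !addr0 divr_ge0 ?sqr_ge0 // mulr_ge0 // ltW.
Qed.

(* [zQ0, zS0] solve the first-order conditions of the row costs: off the diagonal they
   force [nu j * q j = - sigma * s * rho j / sqrtn], which leaves two linear equations in
   [q i] and [s]. *)
Definition rho_gap : R := n%:R - \sum_(j < n) rho j ^+ 2.

Definition rho_gap_at i : R := rho_gap + rho i ^+ 2.

Definition zQ0_diag i : R :=
  rho_gap_at i / (rho_gap_at i + c i * gam i * nu i ^+ 2 * rho_gap).

Definition zS0 i : R := - (rho i * nu i * zQ0_diag i * sqrtn) / (sigma * rho_gap_at i).

Definition zQ0 : 'M[R]_n := \matrix_(i, j)
  if j == i then zQ0_diag i else rho i * rho j * nu i * zQ0_diag i / (rho_gap_at i * nu j).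

Lemma rho_gap_gt0 : 0 < rho_gap.
Proof. by rewrite subr_gt0 sum_sqr_lt_card. Qed.

Lemma rho_gap_at_gt0 i : 0 < rho_gap_at i.
Proof. by rewrite ltr_wpDr ?sqr_ge0 ?rho_gap_gt0. Qed.

Lemma zQ0_diag_den_gt0 i : 0 < rho_gap_at i + c i * gam i * nu i ^+ 2 * rho_gap.
Proof. by rewrite addr_gt0 ?rho_gap_at_gt0 // !mulr_gt0 ?exprn_gt0 ?rho_gap_gt0. Qed.

Lemma zQ0_diag_gt0 i : 0 < zQ0 i i.
Proof. by rewrite mxE eqxx divr_gt0 ?rho_gap_at_gt0 ?zQ0_diag_den_gt0. Qed.

Lemma sgr_zQ0_offdiag i j : i != j -> Num.sg (zQ0 i j) = Num.sg (rho i * rho j).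
Proof.
move=> ij; rewrite mxE eq_sym (negbTE ij).
rewrite (_ : _ / _ = rho i * rho j * (nu i * zQ0_diag i / (rho_gap_at i * nu j))); last by ring.
have := zQ0_diag_gt0 i; rewrite mxE eqxx => qd_gt0.
rewrite sgrM [Num.sg (nu i * _ / _)]gtr0_sg ?mulr1 //.
by apply: divr_gt0; apply: mulr_gt0; rewrite ?rho_gap_at_gt0 ?nu_gt0.
Qed.

Lemma sgr_zS0 i : Num.sg (zS0 i) = - Num.sg (rho i).
Proof.
rewrite /zS0 (_ : - _ / _ = rho i * - (nu i * zQ0_diag i * sqrtn / (sigma * rho_gap_at i))).
  have := zQ0_diag_gt0 i; rewrite mxE eqxx => qd_gt0.
  rewrite sgrM sgrN [Num.sg (_ / _)]gtr0_sg ?mulrN1 //.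
  exact: divr_gt0 (mulr_gt0 (mulr_gt0 (nu_gt0 i) qd_gt0) sqrtn_gt0)
                  (mulr_gt0 sigma_gt0 (rho_gap_at_gt0 i)).
by ring.
Qed.

Lemma zQ0_offdiag_stationary i j :
  j != i -> nu j * zQ0 i j + sigma * zS0 i * rho j / sqrtn = 0.
Proof.
move=> ji; rewrite mxE (negbTE ji) /zS0.
have gap_gt0 := rho_gap_at_gt0 i; have nuj_gt0 := nu_gt0 j; have sqrtn_pos := sqrtn_gt0.
by field; rewrite !gt_eqF.
Qed.

Lemma zQ0_diag_stationary i :
  gam i * nu i * (nu i * zQ0 i i + sigma * zS0 i * rho i / sqrtn) + (zQ0 i i - 1) / c i = 0.
Proof.
rewrite mxE eqxx /zS0 /zQ0_diag.
have gap_gt0 := rho_gap_at_gt0 i; have den_gt0 := zQ0_diag_den_gt0 i.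
have ci_gt0 := c_gt0 i; have sqrtn_pos := sqrtn_gt0.
rewrite /rho_gap_at in gap_gt0 den_gt0 *.
by field; rewrite !gt_eqF.
Qed.

Lemma zS0_stationary i : sigma * zS0 i + sqrtn^-1 * \sum_(j < n) rho j * nu j * zQ0 i j = 0.
Proof.
have gapE : rho_gap_at i = sqrtn ^+ 2 - \sum_(j < n | j != i) rho j ^+ 2.
  by rewrite /rho_gap_at /rho_gap (bigD1 i) //= sqrtn_sqr; ring.
have offE : \sum_(j < n | j != i) rho j * nu j * zQ0 i j
    = rho i * nu i * zQ0_diag i / rho_gap_at i * \sum_(j < n | j != i) rho j ^+ 2.
  rewrite mulr_sumr; apply: eq_bigr => j ji; rewrite mxE (negbTE ji).
  by field; rewrite !gt_eqF ?nu_gt0 ?rho_gap_at_gt0.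
rewrite (bigD1 i) //= offE mxE eqxx /zS0.
have := rho_gap_at_gt0 i; rewrite gapE => gap_gt0.
by field; rewrite !gt_eqF ?sqrtn_gt0.
Qed.

Lemma zQ0_row_excess_bounds i (q : 'I_n -> R) (s : R) j :
  gam i * theta * (nu j * (q j - zQ0 i j)) ^+ 2
    <= 4 * (row_cost i q s - row_cost i (zQ0 i) (zS0 i)) /\
  gam i * theta * (sigma * (s - zS0 i)) ^+ 2
    <= 4 * (row_cost i q s - row_cost i (zQ0 i) (zS0 i)).
Proof.
have := @row_cost_growth i (zQ0 i) q (zS0 i) s (@zQ0_offdiag_stationary i)
  (zQ0_diag_stationary i) (zS0_stationary i).
set D := row_cost i q s - _; set x := sigma * (s - zS0 i); set r := rho j / sqrtn.
set y := nu j * (q j - zQ0 i j) => growth.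
have r2_le1 : r ^+ 2 <= 1.
  rewrite expr_div_n sqrtn_sqr ler_pdivrMr ?ltr0n // mul1r.
  have /andP[? ?] := rho_bound j; have : 1 <= (n%:R : R) by rewrite ler1n.
  by move=> ?; nra.
have th_range : 0 <= theta <= 1 by rewrite theta_le1 ltW ?theta_gt0.
have : (y + x * r) ^+ 2 + theta * x ^+ 2
    <= \sum_(k < n) (nu k * (q k - zQ0 i k) + x * rho k / sqrtn) ^+ 2 + theta * x ^+ 2.
  by rewrite lerD2r /y /r mulrA (sum_sqr_le_sum (fun k => _ + x * rho k / sqrtn)).
move=> /(ler_wpM2l (ltW (gam_gt0 i))) key.
have : (y + x * r) ^+ 2 + theta * x ^+ 2 <= 2 * D / gam i.
  by rewrite ler_pdivlMr ?gam_gt0 //; nra.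
case/(sqr_bounds_of_completed_sqr th_range r2_le1) => hy hx.
by split; rewrite -mulrA -ler_pdivlMl ?gam_gt0 //; [lra | nra].
Qed.

Definition deviation_const i : R := 2 * penalty zQ0 zS0 / (n%:R * (gam i * theta)).

Lemma deviation_const_ge0 i : 0 <= deviation_const i.
Proof.
have n_pos : 0 < (n%:R : R) by rewrite ltr0n.
have den_gt0 := mulr_gt0 n_pos (mulr_gt0 (gam_gt0 i) theta_gt0).
exact: divr_ge0 (mulr_ge0 (ler0n _ 2) (penalty_ge0 _ _)) (ltW den_gt0).
Qed.

Lemma global_max_near_zQ0 (gP : R) (zQ : 'M[R]_n) (zS : 'I_n -> R) : 0 <= gP ->
  is_global_max sigma gP c gam nu rho zQ zS ->
  (forall i j, (zQ i j - zQ0 i j) ^+ 2 <= gP * (deviation_const i / nu j ^+ 2)) /\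
  (forall i, (zS i - zS0 i) ^+ 2 <= gP * (deviation_const i / sigma ^+ 2)).
Proof.
move=> gP_ge0 zmax.
pose D i := row_cost i (zQ i) (zS i) - row_cost i (zQ0 i) (zS0 i).
have excess i j := zQ0_row_excess_bounds i (zQ i) (zS i) j.
have gth_gt0 i : 0 < gam i * theta by rewrite mulr_gt0 ?theta_gt0.
have D_ge0 i : 0 <= D i.
  have [_ bound] := excess i i.
  have := mulr_ge0 (ltW (gth_gt0 i)) (sqr_ge0 (sigma * (zS i - zS0 i))); rewrite /D; lra.
have D_le i : D i <= gP * penalty zQ0 zS0 / (2 * n%:R).
  apply: le_trans (row_excess_sum_le zQ0 zS0 gP_ge0 zmax).
  by rewrite (bigD1 i) //= lerDl sumr_ge0 // => k _; apply: D_ge0.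
have dev i (y : R) : gam i * theta * y ^+ 2 <= 4 * D i -> y ^+ 2 <= gP * deviation_const i.
  have n_pos : 0 < (n%:R : R) by rewrite ltr0n.
  rewrite (_ : gP * deviation_const i
             = 4 * (gP * penalty zQ0 zS0 / (2 * n%:R)) / (gam i * theta)); last first.
    by rewrite /deviation_const; field; rewrite !gt_eqF ?theta_gt0.
  rewrite ler_pdivlMr // mulrC => /le_trans; apply; exact: ler_wpM2l (D_le i).
split=> [i j|i].
- rewrite mulrA ler_pdivlMr ?exprn_gt0 // mulrC -exprMn.
  exact/dev/(excess i j).1.
- rewrite mulrA ler_pdivlMr ?exprn_gt0 // mulrC -exprMn.
  exact/dev/(excess i i).2.
Qed.

End Objective.

Theorem mainTheorem13 (R : realType) (n : nat) (sigma : R)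
  (c gam nu rho : 'I_n -> R) :
  (1 <= n)%N -> 0 < sigma ->
  (forall i, 0 < c i) -> (forall i, 0 < gam i) -> (forall i, 0 < nu i) ->
  (forall i, -1 < rho i < 1) ->
  exists gbar : R, 0 < gbar /\
    forall gP : R, 0 < gP -> gP < gbar ->
    forall (zQ : 'M[R]_n) (zS : 'I_n -> R),
      is_global_max sigma gP c gam nu rho zQ zS ->
      (forall i, 0 < zQ i i) /\
      (forall i, rho i != 0 -> Num.sg (zS i) = - Num.sg (rho i)) /\
      (forall i j, i != j -> rho i * rho j != 0 ->
         Num.sg (zQ i j) = Num.sg (rho i * rho j)).
Proof.
move=> n_gt0 sigma_gt0 c_gt0 gam_gt0 nu_gt0 rho_bound.
have near := global_max_near_zQ0 n_gt0 sigma_gt0 c_gt0 gam_gt0 nu_gt0 rho_bound.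
have sgS0 := sgr_zS0 n_gt0 sigma_gt0 c_gt0 gam_gt0 nu_gt0 rho_bound.
have sgQ0 := sgr_zQ0_offdiag n_gt0 c_gt0 gam_gt0 nu_gt0 rho_bound.
have Q0_diag_gt0 := zQ0_diag_gt0 n_gt0 c_gt0 gam_gt0 nu_gt0 rho_bound.
have C_ge0 := deviation_const_ge0 sigma c nu n_gt0 gam_gt0 rho_bound.
set Q0 := zQ0 c gam nu rho in near sgQ0 Q0_diag_gt0.
set S0 := zS0 sigma c gam nu rho in near sgS0.
have [eQ eQ_gt0 stableQ] := uniform_sgr_stability (fun ij : 'I_n * 'I_n => Q0 ij.1 ij.2)
  (fun ij => divr_ge0 (C_ge0 ij.1) (sqr_ge0 (nu ij.2))).
have [eS eS_gt0 stableS] := uniform_sgr_stability S0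
  (fun i => divr_ge0 (C_ge0 i) (sqr_ge0 sigma)).
exists (Num.min eQ eS); split=> [|gP gP_gt0]; first by rewrite lt_min eQ_gt0.
rewrite lt_min => /andP[gP_ltQ gP_ltS] zQ zS /(near _ _ _ (ltW gP_gt0)) [nearQ nearS].
have sgQ i j : Q0 i j != 0 -> Num.sg (zQ i j) = Num.sg (Q0 i j).
  by move=> Q0_ne0; exact: (stableQ gP (i, j) _ (ltW gP_gt0) gP_ltQ Q0_ne0 (nearQ i j)).
have sgS i : S0 i != 0 -> Num.sg (zS i) = Num.sg (S0 i).
  by move=> S0_ne0; exact: (stableS gP i _ (ltW gP_gt0) gP_ltS S0_ne0 (nearS i)).
split; [|split].
- move=> i; rewrite -sgr_gt0 sgQ.
  + by rewrite gtr0_sg ?Q0_diag_gt0.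
  + by rewrite lt0r_neq0.
- move=> i rho_ne0; have S0_ne0 : S0 i != 0 by rewrite -sgr_eq0 sgS0 oppr_eq0 sgr_eq0.
  by rewrite sgS // sgS0.
- move=> i j ij rr_ne0; have Q0_ne0 : Q0 i j != 0 by rewrite -sgr_eq0 sgQ0 // sgr_eq0.
  by rewrite sgQ // sgQ0.
Qed.
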